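(* Let $G=(V,E)$ be a $3$-uniform hypergraph. Consider the set of minimal canonical N-eigenvectors of the Laplacian tensor $\mathcal D-\mathcal A$ corresponding to the eigenvalue $0$, modulo the equivalence relation generated by $\mathbf x\sim e^{\theta\sqrt{-1}}\mathbf x$ ($\theta\in\mathbb R$) and $\mathbf x\sim\overline{\mathbf x}$ (complex conjugation); each equivalence class is a ''minimal canonical conjugated N-eigenvector pair''. Then the number of these classes equals the number of tripartite connected components of $G$ (counted with multiplicity as explained below).
   Context: A $3$-uniform hypergraph $G=(V,E)$ has vertex set $V=[n]$ ($n\ge3$) and nonempty edge set $E$ of $3$-element subsets; $E_i=\{e\in E:i\in e\}$, $d_i=|E_i|$. Connected components are maximal sets of vertices pairwise joined by chains of edges with consecutive edges intersecting; isolated vertices are also components. $\mathcal A$: $a_{i_1i_2i_3}=\frac12$ if $\{i_1,i_2,i_3\}\in E$, else $0$; $\mathcal D$ diagonal with $d_{iii}=d_i$; so $((\mathcal D-\mathcal A)\mathbf x^{2})_i=d_ix_i^{2}-\sum_{e\in E_i}\prod_{j\in e\setminus\{i\}}x_j$. A nonzero $\mathbf x\in\mathbb C^n$ is an eigenvector of $\mathcal T$ for $\lambda$ if $(\mathcal T\mathbf x^{2})_i=\lambda x_i^{2}$ for all $i$. It is an N-eigenvector if no nonzero complex multiple of $\mathbf x$ lies in $\mathbb R^n$; canonical if $\max_i|x_i|=1$; an eigenvector of eigenvalue $0$ is minimal if no eigenvector of eigenvalue $0$ has support strictly contained in its support. A tripartition of a vertex set $C$ (relative to the edges $e\subseteq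 C$) is an unordered partition $\{R,S,T\}$ of $C$ into three nonempty sets such that every edge $e\subseteq C$ either is contained in one of $R,S,T$ or meets each of $R,S,T$. A connected component $C$ of $G$ contributes to the count of tripartite connected components the number of its tripartitions (two tripartitions are the same only if they agree as unordered set partitions); the number of tripartite connected components of $G$ is the sum of these contributions over all connected components. *)

From Stdlib Require Import Relations.Relation_Definitions Relations.Relation_Operators.
From HB Require Import structures.
From mathcomp Require Import all_boot all_order all_algebra.
Set Implicit Arguments. Unset Strict Implicit. Unset Printing Implicit Defensive.
Import Order.TTheory GRing.Theory Num.Theory.
Local Open Scope ring_scope.

(* A hypergraph on vertex set 'I_n (= {0,..,n-1}, standing for [n]) is given
   by its edge set E : {set {set 'I_n}}. *)

Definition edges_at (n : nat) (E : {set {set 'I_n}}) (i : 'I_n) : {set {set 'I_n}} :=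
  [set e in E | i \in e].
Definition deg (n : nat) (E : {set {set 'I_n}}) (i : 'I_n) : nat := #|edges_at E i|.

Definition tensor3 (C : Type) (n : nat) := 'I_n -> 'I_n -> 'I_n -> C.

Definition adjT (C : numClosedFieldType) (n : nat) (E : {set {set 'I_n}}) : tensor3 C n :=
  fun i j k => if [set i; j; k] \in E then 2^-1 else 0.

Definition degT (C : numClosedFieldType) (n : nat) (E : {set {set 'I_n}}) : tensor3 C n :=
  fun i j k => if (i == j) && (j == k) then (deg E i)%:R else 0.

Definition lapT (C : numClosedFieldType) (n : nat) (E : {set {set 'I_n}}) : tensor3 C n :=
  fun i j k => degT C E i j k - adjT C E i j k.

Definition tapply (C : numClosedFieldType) (n : nat) (T : tensor3 C n) (x : 'I_n -> C)
  (i : 'I_n) : C := \sum_(j < n) \sum_(k < n) T i j k * x j * x k.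

Definition is_eigvec (C : numClosedFieldType) (n : nat) (T : tensor3 C n) (lam : C)
  (x : 'I_n -> C) : Prop :=
  (exists i, x i != 0) /\ forall i, tapply T x i = lam * x i ^+ 2.

Definition supp (C : numClosedFieldType) (n : nat) (x : 'I_n -> C) : {set 'I_n} :=
  [set i | x i != 0].

Definition is_N (C : numClosedFieldType) (n : nat) (x : 'I_n -> C) : Prop :=
  ~ exists c : C, c != 0 /\ forall i, c * x i \is Num.real.

Definition canonical (C : numClosedFieldType) (n : nat) (x : 'I_n -> C) : Prop :=
  (forall i, `|x i| <= 1) /\ exists i, `|x i| = 1.

Definition minimal0 (C : numClosedFieldType) (n : nat) (T : tensor3 C n) (x : 'I_n -> C) : Prop :=
  is_eigvec T 0 x /\ ~ exists y, is_eigvec T 0 y /\ supp y \proper supp x.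

Definition min_can_N (C : numClosedFieldType) (n : nat) (E : {set {set 'I_n}})
  (x : 'I_n -> C) : Prop :=
  minimal0 (lapT C E) x /\ canonical x /\ is_N x.

Definition basic_step (C : numClosedFieldType) (n : nat) (x y : 'I_n -> C) : Prop :=
  (exists c : C, `|c| = 1 /\ y = (fun i => c * x i)) \/ y = (fun i => (x i)^*).

Definition pair_equiv (C : numClosedFieldType) (n : nat) : relation ('I_n -> C) :=
  clos_refl_sym_trans _ (@basic_step C n).

Definition adjv (n : nat) (E : {set {set 'I_n}}) : rel 'I_n :=
  fun i j => [exists e in E, (i \in e) && (j \in e)].

(* connected components (isolated vertices are singleton components) *)
Definition components (n : nat) (E : {set {set 'I_n}}) : {set {set 'I_n}} :=
  [set [set j | connect (adjv E) i j] | i : 'I_n].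

Definition tripartition (n : nat) (E : {set {set 'I_n}}) (Cc : {set 'I_n})
  (P : {set {set 'I_n}}) : bool :=
  [&& partition P Cc, #|P| == 3 &
      [forall e in E, (e \subset Cc) ==>
         ([exists B in P, e \subset B] || [forall B in P, e :&: B != set0])]].

Definition num_tripartite (n : nat) (E : {set {set 'I_n}}) : nat :=
  (\sum_(Cc in components E) #|[set P | tripartition E Cc P]|)%N.

(* Proof.  (1) The Laplacian acts by (L x^2)_i = d_i x_i^2 - sum a_ijk x_j x_k
   with sum_(j,k) a_ijk = d_i.  At a vertex of maximal modulus, the equality
   case of the triangle inequality forces x_j x_k = x_i^2 on every edge
   {i, j, k}; so the maximal modulus spreads over a whole component.  Hence the
   minimal canonical solutions are exactly the "phase vectors": supported on a
   component K, of modulus 1 there, with x_j x_k = x_i^2 on the edges of K.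
   (2) A tripartition {B_0, B_1, B_2} of K gives the phase vector omega^t on
   B_t (omega a primitive cube root of unity), which is an N-eigenvector.
   (3) Conversely, an N phase vector has values in x_i0 * {1, omega, omega^2},
   its edges are monochromatic or rainbow, and its level sets form a
   tripartition of K; two phase vectors with the same level sets agree after
   normalisation up to conjugation, so they are equivalent.  (4) The level sets
   are invariant under the equivalence, which gives injectivity, and
   num_tripartite counts the tripartitions of all components. *)

From HB Require Import structures.
From mathcomp Require Import all_boot all_order all_algebra.
From mathcomp Require Import ring zify.
From Stdlib Require Import FunctionalExtensionality Relation_Operators.
Import Order.TTheory GRing.Theory Num.Theory.
Set Implicit Arguments. Unset Strict Implicit. Unset Printing Implicit Defensive.
Local Open Scope ring_scope.

Section CubeRoots.
Variable C : numClosedFieldType.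

Definition om : C := (-1 + sqrtC (-3)) / 2.

Lemma om_cyclotomic : om ^+ 2 + om + 1 = 0.
Proof.
have two_neq0 : (2 : C) != 0 by rewrite pnatr_eq0.
have -> : om ^+ 2 + om + 1 = (sqrtC (-3 : C) ^+ 2 + 3) / 4 by rewrite /om; field.
by rewrite sqrtCK addNr mul0r.
Qed.

Lemma om3 : om ^+ 3 = 1.
Proof.
apply/eqP; rewrite -subr_eq0.
have -> : om ^+ 3 - 1 = (om - 1) * (om ^+ 2 + om + 1) by ring.
by rewrite om_cyclotomic mulr0.
Qed.

Lemma om_neq0 : om != 0.
Proof. by apply: contra_eq_neq om3 => ->; rewrite expr0n eq_sym oner_eq0. Qed.

(* omega has modulus 1, so its conjugate is its inverse omega^2. *)
Lemma norm_om : `|om| = 1.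
Proof.
have /eqP : `|om| ^+ 3 = 1 by rewrite -normrX om3 normr1.
by rewrite pexprn_eq1 // => /eqP.
Qed.

Lemma conj_om : om^* = om ^+ 2.
Proof.
have h : om * om^* = 1 by rewrite -normCK norm_om expr1n.
by apply: (mulfI om_neq0); rewrite h -exprS om3.
Qed.

Lemma cube_roots (z : C) : z ^+ 3 = 1 -> [\/ z = 1, z = om | z = om ^+ 2].
Proof.
move=> hz.
have factor : (z - 1) * (z - om) * (z - om ^+ 2) =
   z ^+ 3 - 1 - (z - 1) * (om ^+ 2 + om + 1) * z + (z - 1) * (om ^+ 3 - 1) by ring.
rewrite om_cyclotomic om3 hz subrr !mulr0 mul0r subr0 addr0 in factor.
move/eqP: factor; rewrite !mulf_eq0 !subr_eq0 => /orP[/orP[]|] /eqP ->.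
- by constructor 1.
- by constructor 2.
- by constructor 3.
Qed.

Lemma om_pow_inj (a b : nat) : (a < 3)%N -> (b < 3)%N ->
  (om ^+ a == om ^+ b) = (a == b).
Proof.
have om_neq1 : om != 1.
  apply: contra_eq_neq om_cyclotomic => ->.
  by rewrite expr1n (_ : 1 + 1 + 1 = 3%:R :> C) ?pnatr_eq0 //; ring.
have om2_neq1 : om ^+ 2 != 1.
  by apply: contra_neq om_neq1 => h; rewrite -om3 exprS h mulr1.
have om_neq_om2 : om != om ^+ 2.
  by apply: contra_neq om_neq1 => h; rewrite -om3 exprS -h -expr2 -h.
case: a b => [|[|[|a]]] [|[|[|b]]] //= _ _;
  by rewrite ?expr0 ?expr1 ?eqxx // ?(negbTE om_neq1) ?(negbTE om2_neq1)
    ?(negbTE om_neq_om2) // eq_sym ?(negbTE om_neq1) ?(negbTE om2_neq1)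
    ?(negbTE om_neq_om2).
Qed.

Lemma conj_om2 : (om ^+ 2)^* = om.
Proof.
by rewrite rmorphXn /= conj_om -exprM (_ : (2 * 2 = 3 + 1)%N) // exprD om3 mul1r.
Qed.

(* For pairwise distinct exponents a, b, c in {0, 1, 2}: omega^b omega^c = (omega^a)^2,
   since b + c = 3 - a = 2a (mod 3). *)
Lemma om_rainbow (a b c : nat) : (a < 3)%N -> (b < 3)%N -> (c < 3)%N ->
  a != b -> a != c -> b != c -> om ^+ b * om ^+ c = (om ^+ a) ^+ 2.
Proof.
move=> ha hb hc hab hac hbc.
have hmod : ((b + c) %% 3 = (a * 2) %% 3)%N by lia.
by rewrite -exprD -exprM -(expr_mod _ om3) hmod (expr_mod _ om3).
Qed.

Lemma cube_root_conj_neq (z : C) : z ^+ 3 = 1 -> z != 1 -> z^* != z.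
Proof.
case/cube_roots=> ->; rewrite ?eqxx // => _.
  by rewrite conj_om -[X in _ != X]expr1 om_pow_inj.
by rewrite conj_om2 -[X in X != _]expr1 om_pow_inj.
Qed.

Lemma cube_root_pair (z w : C) : z ^+ 3 = 1 -> w ^+ 3 = 1 -> z != 1 -> w != 1 ->
  w = z \/ w = z^*.
Proof.
case/cube_roots=> ->; case/cube_roots=> ->; rewrite ?eqxx // => _ _;
  by [left | right; rewrite ?conj_om ?conj_om2].
Qed.

Lemma cube_roots_cover (a b d w : C) : a ^+ 3 = 1 -> b ^+ 3 = 1 -> d ^+ 3 = 1 ->
  w ^+ 3 = 1 -> a != b -> a != d -> b != d -> (w == a) || (w == b) || (w == d).
Proof.
by do 4!case/cube_roots=> ->; rewrite ?eqxx ?orbT.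
Qed.

(* Two cube-root-valued functions on K with the same level sets and the same
   fibre over 1 agree, or are complex conjugate, uniformly on K: pointwise they
   agree up to conjugation, and a mixed pair of vertices would produce a
   non-real cube root fixed by conjugation. *)
Lemma cube_ratio_uniform (T : finType) (K : {set T}) (a b : T -> C) :
  {in K, forall u, a u ^+ 3 = 1} -> {in K, forall u, b u ^+ 3 = 1} ->
  {in K &, forall u v, (a u == a v) = (b u == b v)} ->
  {in K, forall u, (a u == 1) = (b u == 1)} ->
  {in K, a =1 b} \/ {in K, forall u, a u = (b u)^*}.
Proof.
move=> a3 b3 ab_eq ab_1.
have pointwise u : u \in K -> a u = b u \/ a u = (b u)^*.
  move=> hu; have [hb1|hb1] := eqVneq (b u) 1.
    by left; apply/eqP; rewrite hb1 ab_1 ?hb1.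
  by apply: cube_root_pair; rewrite ?a3 ?b3 ?ab_1.
have [/forall_inP agree|] := boolP [forall (u | u \in K), a u == b u].
  by left=> u /agree /eqP.
rewrite negb_forall_in => /exists_inP[u hu hne]; right=> v hv.
have hau : a u = (b u)^* by case: (pointwise u hu) => // hau; rewrite hau eqxx in hne.
have hbu1 : b u != 1 by apply: contra_neq hne => hb; rewrite hau hb conjC1.
have hfix := cube_root_conj_neq (b3 u hu) hbu1.
have [hav|//] := pointwise v hv; have [hbv1|hbv1] := eqVneq (b v) 1.
  by rewrite hav hbv1 conjC1.
case: (cube_root_pair (b3 u hu) (b3 v hv) hbu1 hbv1) => hbv; case/negP: hfix.
  have hvu : a v = a u by apply/eqP; rewrite ab_eq // hbv.
  by rewrite -hau -hvu hav hbv.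
have hvu : b v = b u by apply/eqP; rewrite -ab_eq // hav hbv hau.
by rewrite -hbv hvu.
Qed.

End CubeRoots.

Section Triples.
Variable T : finType.

Lemma set3_eq (i j k a b : T) : i != a -> i != b -> a != b ->
  ([set i; j; k] == [set i; a; b]) = ((j == a) && (k == b)) || ((j == b) && (k == a)).
Proof.
move=> hia hib hab; apply/idP/idP; last first.
  by case/orP=> /andP[/eqP -> /eqP ->] //; rewrite setUAC.
move/eqP/setP=> H.
move: (H j) (H k) (H a) (H b); rewrite !inE !eqxx ?orbT /= => /esym Hj /esym Hk Ha Hb.
have hai : (a == i) = false by rewrite eq_sym (negbTE hia).
have hbi : (b == i) = false by rewrite eq_sym (negbTE hib).
have hba : (b == a) = false by rewrite eq_sym (negbTE hab).
move: Ha Hb; rewrite hai hbi /=.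
case/orP: Hj => [/orP[]|] /eqP ?; case/orP: Hk => [/orP[]|] /eqP ?; subst;
  by rewrite ?eqxx ?hai ?hbi ?hba ?(negbTE hab) ?(negbTE hia) ?(negbTE hib) ?orbT ?andbT.
Qed.

Lemma edge_split (e : {set T}) (i : T) : #|e| = 3%N -> i \in e ->
  exists a b, [/\ i != a, i != b, a != b & e = [set i; a; b]].
Proof.
move=> h3 hi.
have : #|e :\ i| == 2%N by move: (cardsD1 i e); rewrite hi h3 add1n => -[<-].
case/cards2P=> a [b [hab He]].
have : (a \in e :\ i) && (b \in e :\ i) by rewrite He !inE !eqxx orbT.
rewrite !inE => /andP[/andP[hai _] /andP[hbi _]].
exists a, b; split; rewrite 1?[i == _]eq_sym //.
by rewrite -[in LHS](setD1K hi) He setUA.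
Qed.

Lemma edge_third (e : {set T}) (i j : T) : #|e| = 3%N -> i \in e -> j \in e ->
  i != j -> exists k, e = [set i; j; k].
Proof.
move=> h3 hi hj hij.
have [a [b [hia hib hab He]]] := edge_split h3 hi.
move: hj; rewrite He !inE => /orP[/orP[]|] /eqP hj.
- by rewrite hj eqxx in hij.
- by exists b; rewrite hj.
- by exists a; rewrite hj setUAC.
Qed.

Lemma set3_card (i j k : T) : #|[set i; j; k]| = 3%N -> [/\ i != j, i != k & j != k].
Proof.
rewrite -setUA cardsU1 cards2 !inE negb_or.
by case: (i != j); case: (i != k); case: (j != k).
Qed.

End Triples.

Lemma card_indicator (T : finType) (A : {pred T}) : #|A| = (\sum_x (x \in A : nat))%N.
Proof. by rewrite -sum1_card big_mkcond /=; apply: eq_bigr => x _; case: (x \in A). Qed.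

Section Laplacian.
Variables (n : nat) (E : {set {set 'I_n}}).
Hypothesis E3 : forall e, e \in E -> #|e| = 3%N.

Lemma ordered_pairs_of_edge (e : {set 'I_n}) (i : 'I_n) : #|e| = 3%N -> i \in e ->
  #|[set p : 'I_n * 'I_n | [set i; p.1; p.2] == e]| = 2%N.
Proof.
move=> h3 hi; have [a [b [hia hib hab ->]]] := edge_split h3 hi.
have -> : [set p : 'I_n * 'I_n | [set i; p.1; p.2] == [set i; a; b]] = [set (a, b); (b, a)].
  by apply/setP=> -[j k]; rewrite !inE set3_eq // !xpair_eqE.
by rewrite cards2 xpair_eqE negb_and hab.
Qed.

(* Counting ordered pairs: #{(j, k) | {i, j, k} in E} = 2 d_i, by grouping the
   pairs according to the edge {i, j, k} they span. *)
Lemma ordered_pairs_at (i : 'I_n) :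
  #|[set p : 'I_n * 'I_n | [set i; p.1; p.2] \in E]| = (2 * deg E i)%N.
Proof.
rewrite -sum1_card (partition_big (fun p => [set i; p.1; p.2]) (mem (edges_at E i))) /=;
  last by move=> p; rewrite !inE => ->; rewrite eqxx.
rewrite /deg -sum1_card big_distrr /=; apply: eq_bigr => e; rewrite inE => /andP[he hie].
rewrite -(ordered_pairs_of_edge (E3 he) hie) muln1 -sum1_card.
by apply: eq_bigl => p; rewrite !inE andb_idl // => /eqP ->.
Qed.

Lemma adj_row_sum (C : numClosedFieldType) (i : 'I_n) :
  \sum_(j < n) \sum_(k < n) adjT C E i j k = (deg E i)%:R.
Proof.
have adj_indicator j k : adjT C E i j k = (([set i; j; k] \in E) : nat)%:R / 2.
  by rewrite /adjT; case: ifP; rewrite ?mul1r ?mul0r.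
rewrite pair_bigA /=; under eq_bigr => p _ do rewrite adj_indicator.
rewrite -mulr_suml -natr_sum -card_indicator -cardsE ordered_pairs_at natrM.
by rewrite mulrAC divff ?mul1r // pnatr_eq0.
Qed.

Lemma tapply_lap (C : numClosedFieldType) (x : 'I_n -> C) (i : 'I_n) :
  tapply (lapT C E) x i =
  (deg E i)%:R * x i ^+ 2 - \sum_(j < n) \sum_(k < n) adjT C E i j k * x j * x k.
Proof.
rewrite /tapply /lapT.
under eq_bigr => j _ do under eq_bigr => k _ do rewrite !mulrBl.
under eq_bigr => j _ do rewrite sumrB.
rewrite sumrB (bigD1 i) //= (bigD1 i) //= big1 => [|k /negbTE hk]; last first.
  by rewrite /degT eqxx eq_sym hk !mul0r.
rewrite addr0 big1 => [|j /negbTE hj]; last first.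
  by rewrite big1 // => k _; rewrite /degT eq_sym hj !mul0r.
by rewrite addr0 /degT !eqxx -mulrA -expr2.
Qed.

End Laplacian.

Section Components.
Variables (n : nat) (E : {set {set 'I_n}}).

Definition comp (i : 'I_n) : {set 'I_n} := [set j | connect (adjv E) i j].

Lemma comp_refl i : i \in comp i.
Proof. by rewrite inE connect0. Qed.

Lemma adjv_edge (e : {set 'I_n}) u v : e \in E -> u \in e -> v \in e -> adjv E u v.
Proof. by move=> he hu hv; apply/existsP; exists e; rewrite he hu hv. Qed.

Lemma connect_adjv_sym : connect_sym (adjv E).
Proof.
by apply: sym_connect_sym => i j; apply/existsP/existsP=> -[e /and3P[he h1 h2]];
  exists e; rewrite he h1 h2.
Qed.

Lemma comp_eq i j : j \in comp i -> comp j = comp i.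
Proof.
rewrite inE => hij; apply/setP=> v; rewrite !inE.
by rewrite (same_connect connect_adjv_sym hij).
Qed.

Lemma comp_edge i (e : {set 'I_n}) u v : e \in E -> u \in e -> v \in e ->
  (u \in comp i) = (v \in comp i).
Proof.
move=> he hu hv; rewrite !inE; apply/idP/idP=> h; apply: connect_trans h (connect1 _).
  exact: adjv_edge he hu hv.
exact: adjv_edge he hv hu.
Qed.

Lemma edge_comp i0 (i j k : 'I_n) : i \in comp i0 -> [set i; j; k] \in E ->
  j \in comp i0 /\ k \in comp i0.
Proof.
move=> hi he; have hi3 : i \in [set i; j; k] by rewrite !inE eqxx.
by split; rewrite -(comp_edge i0 he hi3) // !inE eqxx ?orbT.
Qed.

Lemma comp_ind (F : 'I_n -> Prop) i0 : F i0 ->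
  (forall u v, u \in comp i0 -> adjv E u v -> F u -> F v) ->
  forall w, w \in comp i0 -> F w.
Proof.
move=> h0 hstep w; rewrite inE => /connectP[p hp ->] {w}.
suff along_path u : u \in comp i0 -> F u -> path (adjv E) u p -> F (last u p).
  exact: along_path (comp_refl i0) h0 hp.
elim: p u {hp} => [|a p IH] u hu hFu //= /andP[hua hp].
have ha : a \in comp i0 by move: hu; rewrite !inE => /connect_trans; apply; apply: connect1.
exact: IH ha (hstep _ _ hu hua hFu) hp.
Qed.

End Components.

Lemma weighted_mean_extremal (C : numClosedFieldType) (I : finType) (a w : I -> C) :
  (forall p, 0 <= a p) -> (forall p, `|w p| <= 1) ->
  \sum_p a p * w p = \sum_p a p -> forall p, a p * w p = a p.
Proof.
move=> a_ge0 w_le1 hsum p; apply: (normC_sum_upper _ hsum) => // q _.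
by rewrite normrM ger0_norm // ler_piMr.
Qed.

Lemma prod_eq_sqr_max (R : numDomainType) (a b m : R) : 0 < m ->
  0 <= a -> 0 <= b -> a <= m -> b <= m -> a * b = m * m -> a = m.
Proof.
move=> m_gt0 a_ge0 b_ge0 a_le b_le hab; apply/eqP; rewrite eq_le a_le /=.
rewrite -(ler_pM2r m_gt0) -hab ler_wpM2l //.
Qed.

Lemma real_max_attained (R : numDomainType) (T : finType) (f : T -> R) (t : T) :
  (forall v, f v \is Num.real) -> exists m, forall v, f v <= f m.
Proof.
move=> f_real.
suff [m hm] : exists m, forall v, v \in enum T -> f v <= f m.
  by exists m => v; apply: hm; rewrite mem_enum.
elim: (enum T) => [|a s [m hm]]; first by exists t.
have [le_am|le_ma] := real_leP (f_real a) (f_real m).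
  by exists m => v; rewrite inE => /orP[/eqP ->|/hm].
exists a => v; rewrite inE => /orP[/eqP -> //|/hm hv].
by apply: le_trans hv (ltW le_ma).
Qed.

Section ZeroEigenvectors.
Variables (C : numClosedFieldType) (n : nat) (E : {set {set 'I_n}}).
Hypothesis E3 : forall e, e \in E -> #|e| = 3%N.

Definition eig0 (x : 'I_n -> C) := forall i, tapply (lapT C E) x i = 0.

Lemma eig0_eigvec x : is_eigvec (lapT C E) 0 x -> eig0 x.
Proof. by move=> [_ hx] i; rewrite hx mul0r. Qed.

Lemma edge_eq_at_max x i j k : eig0 x -> (forall v, `|x v| <= `|x i|) -> x i != 0 ->
  [set i; j; k] \in E -> x j * x k = x i ^+ 2.
Proof.
move=> hx hmax hxi he.
pose a j k := adjT C E i j k.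
pose w j k := x j * x k / x i ^+ 2.
have hxi2 : x i ^+ 2 != 0 by rewrite expf_neq0.
have a_ge0 (p : 'I_n * 'I_n) : 0 <= a p.1 p.2.
  by rewrite /a /adjT; case: ifP; rewrite ?invr_ge0 ?ler0n.
have w_le1 (p : 'I_n * 'I_n) : `|w p.1 p.2| <= 1.
  rewrite /w normrM normfV normrX normrM ler_pdivrMr ?exprn_gt0 ?normr_gt0 //.
  by rewrite mul1r expr2 ler_pM ?normr_ge0.
have hsum : \sum_j \sum_k a j k * w j k = \sum_j \sum_k a j k.
  have := hx i; rewrite tapply_lap => /eqP; rewrite subr_eq0 => /eqP heq.
  rewrite adj_row_sum // -(mulfK hxi2 (deg E i)%:R) heq mulr_suml.
  apply: eq_bigr => j' _; rewrite mulr_suml; apply: eq_bigr => k' _.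
  by rewrite /a /w !mulrA.
rewrite !pair_bigA in hsum.
have := weighted_mean_extremal a_ge0 w_le1 hsum (j, k).
have half_neq0 : (2^-1 : C) != 0 by rewrite invr_eq0 pnatr_eq0.
rewrite /a /w /adjT /= he -[X in _ = X]mulr1.
by move=> /(mulfI half_neq0) /divr1_eq.
Qed.

(* The maximal modulus propagates along edges, hence over the whole component. *)
Lemma max_modulus_comp x i0 : eig0 x -> (forall v, `|x v| <= `|x i0|) -> x i0 != 0 ->
  forall w, w \in comp E i0 -> `|x w| = `|x i0|.
Proof.
move=> hx hmax hx0; apply: comp_ind => // u v hu /existsP[e /and3P[he hue hve]] hFu.
have [<- //|huv] := eqVneq u v.
have [k hek] := edge_third (E3 he) hue hve huv.
have umax w' : `|x w'| <= `|x u| by rewrite hFu.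
have hxu : x u != 0 by rewrite -normr_eq0 hFu normr_eq0.
have hprod : x v * x k = x u ^+ 2 by apply: edge_eq_at_max hx umax hxu _; rewrite -hek.
rewrite -hFu; apply: (prod_eq_sqr_max (b := `|x k|)); rewrite ?normr_gt0 ?normr_ge0 //.
by rewrite -normrM hprod normrX expr2.
Qed.

Lemma supp_contains_comp y : eig0 y -> (exists v, y v != 0) ->
  exists i, comp E i \subset supp y.
Proof.
move=> hy [v hv].
have [m hm] := real_max_attained v (fun v => normr_real (y v)).
have hm0 : y m != 0.
  by apply: contraNneq hv => ym0; move: (hm v); rewrite ym0 normr0 normr_le0.
exists m; apply/subsetP=> w hw; rewrite inE -normr_eq0.
by rewrite (max_modulus_comp hy hm hm0 hw) normr_eq0.
Qed.

(* These will turn out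
   to be exactly the minimal canonical eigenvectors of eigenvalue 0. *)
Definition phase_vec (x : 'I_n -> C) (K : {set 'I_n}) :=
  [/\ forall v, v \notin K -> x v = 0, forall v, v \in K -> `|x v| = 1 &
      forall i j k, i \in K -> [set i; j; k] \in E -> x j * x k = x i ^+ 2].

Section PhaseVector.
Variables (x : 'I_n -> C) (i0 : 'I_n).
Hypothesis hx : phase_vec x (comp E i0).

Lemma phase_nz w : w \in comp E i0 -> x w != 0.
Proof. by case: hx => _ h _ hw; rewrite -normr_eq0 h // oner_eq0. Qed.

Lemma supp_phase : supp x = comp E i0.
Proof.
apply/setP=> v; rewrite inE; have [hv|hv] := boolP (v \in comp E i0).
  exact: phase_nz.
by case: hx => h _ _; rewrite h // eqxx.
Qed.

Lemma phase_edge a b d : a \in comp E i0 -> [set a; b; d] \in E ->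
  [/\ x b * x d = x a ^+ 2, x a * x d = x b ^+ 2 & x a * x b = x d ^+ 2].
Proof.
case: hx => _ _ h ha he; have [hb hd] := edge_comp ha he.
split; first exact: h.
  by apply: h => //; rewrite (setUC [set b]).
by apply: h => //; rewrite -setUA setUC.
Qed.

(* Phase vectors solve the system: on K each term a_ijk x_j x_k equals
   a_ijk x_i^2, and off K every edge at i misses K. *)
Lemma phase_eig0 : eig0 x.
Proof.
move=> v; rewrite tapply_lap; apply/eqP; rewrite subr_eq0; apply/eqP.
case: hx => h0 _ h2; have [hv|hv] := boolP (v \in comp E i0).
  rewrite -(adj_row_sum E3) mulr_suml; apply: eq_bigr => j _; rewrite mulr_suml.
  apply: eq_bigr => k _; rewrite /adjT; case: ifP => he; last by rewrite !mul0r.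
  by rewrite -mulrA (h2 v).
rewrite h0 // expr0n mulr0 big1 // => j _; rewrite big1 // => k _.
rewrite /adjT; case: ifP => he; last by rewrite !mul0r.
have hj : j \notin comp E i0.
  have hv3 : v \in [set v; j; k] by rewrite !inE eqxx.
  have hj3 : j \in [set v; j; k] by rewrite !inE eqxx orbT.
  by rewrite -(comp_edge i0 he hv3 hj3).
by rewrite (h0 j hj) mulr0 mul0r.
Qed.

(* Phase vectors are minimal canonical eigenvectors of eigenvalue 0: a
   solution with smaller support would contain a whole component. *)
Lemma phase_minimal : minimal0 (lapT C E) x /\ canonical x.
Proof.
have [h0 h1 _] := hx.
split; last first.
  split; last by exists i0; rewrite h1 ?comp_refl.
  by move=> v; have [/h1 ->|/h0 ->] := boolP (v \in comp E i0); rewrite ?normr0.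
split.
  by split=> [|i]; [exists i0; exact: phase_nz (comp_refl E i0) | rewrite mul0r phase_eig0].
move=> [y [hy]]; have [i hi] := supp_contains_comp (eig0_eigvec hy) (proj1 hy).
rewrite properE supp_phase => /andP[hsub].
have hii : i \in comp E i0 by apply: (subsetP hsub); apply: (subsetP hi); apply: comp_refl.
by rewrite -(comp_eq hii) hi.
Qed.

End PhaseVector.

(* Conversely, a minimal canonical eigenvector of eigenvalue 0 is a phase
   vector: restricting it to the component of a maximal entry yields a phase
   vector, whose support cannot be strictly smaller by minimality. *)
Lemma minimal_phase x : minimal0 (lapT C E) x -> canonical x ->
  exists i0, phase_vec x (comp E i0).
Proof.
move=> [[hx0 hx] hmin] [hle [i0 hi0]].
have hmax v : `|x v| <= `|x i0| by rewrite hi0.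
have hi0' : x i0 != 0 by rewrite -normr_eq0 hi0 oner_eq0.
have hn1 w : w \in comp E i0 -> `|x w| = 1.
  by move=> hw; rewrite (max_modulus_comp (eig0_eigvec (conj hx0 hx)) hmax hi0' hw).
have hrel i j k : i \in comp E i0 -> [set i; j; k] \in E -> x j * x k = x i ^+ 2.
  move=> hi he; apply: edge_eq_at_max (eig0_eigvec (conj hx0 hx)) _ _ he.
    by move=> v; rewrite (hn1 i hi).
  by rewrite -normr_eq0 (hn1 i hi) oner_eq0.
exists i0; split => // v hv; apply/eqP/negPn/negP => hxv.
pose y v := if v \in comp E i0 then x v else 0.
have hy : phase_vec y (comp E i0).
  split=> [w /negbTE hw|w hw|i j k hi he]; rewrite /y ?hw ?hn1 //.
  by have [hj hk] := edge_comp hi he; rewrite hi hj hk (hrel i j k hi he).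
apply: hmin; exists y; split; first by case: (phase_minimal hy) => -[].
rewrite (supp_phase hy) properE; apply/andP; split.
  by apply/subsetP=> w hw; rewrite inE -normr_eq0 hn1 // oner_eq0.
by apply/subsetP=> /(_ v); rewrite inE hxv (negbTE hv) => /(_ isT).
Qed.

End ZeroEigenvectors.

Section TripartitionVectors.
Variables (C : numClosedFieldType) (n : nat) (E : {set {set 'I_n}}).
Hypothesis E3 : forall e, e \in E -> #|e| = 3%N.

Definition block_index (P : {set {set 'I_n}}) (v : 'I_n) : nat :=
  index (pblock P v) (enum P).

Definition trip_vec (P : {set {set 'I_n}}) (v : 'I_n) : C :=
  if v \in cover P then om C ^+ block_index P v else 0.

Section OnePartition.
Variables (P : {set {set 'I_n}}) (K : {set 'I_n}).
Hypothesis hP : partition P K.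
Hypothesis hP3 : #|P| = 3%N.

Let coverP : cover P = K. Proof. exact: cover_partition. Qed.
Let trivP : trivIset P. Proof. by case/and3P: hP. Qed.

Lemma pblock_in v : v \in K -> pblock P v \in P.
Proof. by move=> hv; apply: pblock_mem; rewrite coverP. Qed.

Lemma block_index_lt v : v \in K -> (block_index P v < 3)%N.
Proof. by move=> hv; rewrite /block_index -hP3 cardE index_mem mem_enum pblock_in. Qed.

Lemma block_index_eq u v : u \in K -> v \in K ->
  (block_index P u == block_index P v) = (pblock P u == pblock P v).
Proof.
move=> hu hv; apply/eqP/eqP => [|heq]; last by rewrite /block_index heq.
by apply: index_inj; rewrite ?mem_enum ?pblock_in.
Qed.

Lemma block_index_onto t : (t < 3)%N -> exists2 w, w \in K & block_index P w = t.
Proof.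
move=> ht; have hs : size (enum P) = 3%N by rewrite -cardE.
have hB : nth set0 (enum P) t \in P by rewrite -mem_enum mem_nth // hs.
have [w hw] : exists w, w \in nth set0 (enum P) t.
  by apply/set0Pn; apply: contraTneq hB => ->; case/and3P: hP.
exists w; first by rewrite -coverP; apply/bigcupP; exists (nth set0 (enum P) t).
by rewrite /block_index (def_pblock trivP hB hw) index_uniq ?hs ?enum_uniq.
Qed.

Lemma trip_vec_in v : v \in K -> trip_vec P v = om C ^+ block_index P v.
Proof. by move=> hv; rewrite /trip_vec coverP hv. Qed.

Lemma trip_vec_out v : v \notin K -> trip_vec P v = 0.
Proof. by move=> hv; rewrite /trip_vec coverP (negbTE hv). Qed.

Lemma trip_vec_eq u v : u \in K -> v \in K ->
  (trip_vec P u == trip_vec P v) = (pblock P u == pblock P v).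
Proof.
by move=> hu hv; rewrite !trip_vec_in // om_pow_inj ?block_index_lt ?block_index_eq.
Qed.

Lemma rainbow_pblock_inj (e : {set 'I_n}) : #|e| = 3%N -> e \subset K ->
  (forall B, B \in P -> e :&: B != set0) -> {in e &, injective (pblock P)}.
Proof.
move=> he3 heK hmeet.
suff img : pblock P @: e = P by apply/imset_injP; rewrite img he3 hP3.
apply/setP=> B; apply/imsetP/idP => [[v hv ->]|hB].
  by rewrite pblock_in ?(subsetP heK).
have [v] := set0Pn _ (hmeet B hB); rewrite inE => /andP[hve hvB].
by exists v; rewrite // (def_pblock trivP hB hvB).
Qed.

End OnePartition.

(* The vector of a tripartition of a component is a phase vector: a
   monochromatic edge has x_i = x_j = x_k, and on a rainbow edge the exponents
   are 0, 1, 2 in some order, so x_j x_k = omega^3 = x_i^2 as omega^3 = 1. *)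
Lemma trip_vec_phase P i0 : tripartition E (comp E i0) P ->
  phase_vec E (trip_vec P) (comp E i0).
Proof.
case/and3P=> hP /eqP hP3 hedges; have trivP : trivIset P by case/and3P: hP.
split=> [v hv|v hv|i j k hi he]; first exact (trip_vec_out hP hv).
  by rewrite (trip_vec_in hP) // normrX norm_om expr1n.
have [hj hk] := edge_comp hi he.
have heK : [set i; j; k] \subset comp E i0.
  by rewrite !subUset !sub1set hi hj hk.
rewrite !(trip_vec_in hP) //.
move/forall_inP: hedges => /(_ _ he); rewrite heK /=.
case/orP=> [/exists_inP[B hB heB] | /forall_inP hmeet].
  have pb w : w \in [set i; j; k] -> pblock P w = B.
    by move=> hw; apply: def_pblock trivP hB (subsetP heB w hw).
  by rewrite /block_index !pb ?expr2 // !inE eqxx ?orbT.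
have inj := rainbow_pblock_inj hP hP3 (E3 he) heK hmeet.
have [hij hik hjk] := set3_card (E3 he).
have index_neq u v : u \in [set i; j; k] -> v \in [set i; j; k] -> u != v ->
    block_index P u != block_index P v.
  move=> hu hv; apply: contra_neq => /eqP.
  by rewrite (block_index_eq hP) ?(subsetP heK) // => /eqP /inj; apply.
by apply: om_rainbow; rewrite ?(block_index_lt hP hP3) //; apply: index_neq;
  rewrite ?inE ?eqxx ?orbT.
Qed.

(* The vector of a tripartition is an N-eigenvector: it takes both the values
   1 and omega, and omega is not real. *)
Lemma trip_vec_N P K : partition P K -> #|P| = 3%N -> is_N (trip_vec P).
Proof.
move=> hP hP3 [c [hc hreal]].
have [w0 hw0 idx0] := block_index_onto hP hP3 (isT : 0 < 3)%N.
have [w1 hw1 idx1] := block_index_onto hP hP3 (isT : 1 < 3)%N.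
have := hreal w0; rewrite (trip_vec_in hP) // idx0 mulr1 => c_real.
have := hreal w1; rewrite (trip_vec_in hP) // idx1 expr1 => com_real.
have : om C \is Num.real by rewrite -(mulKf hc (om C)) realM ?realV.
by rewrite CrealE conj_om -[X in _ == X]expr1 om_pow_inj.
Qed.

Lemma trip_vec_min_can_N P i0 : tripartition E (comp E i0) P -> min_can_N E (trip_vec P).
Proof.
move=> ht; have [hmin hcan] := phase_minimal E3 (trip_vec_phase ht).
by case/and3P: ht => hP /eqP hP3 _; split; [|split] => //; exact: trip_vec_N hP hP3.
Qed.

End TripartitionVectors.

Section PhaseValues.
Variables (C : numClosedFieldType) (n : nat) (E : {set {set 'I_n}}).
Hypothesis E3 : forall e, e \in E -> #|e| = 3%N.
Variables (x : 'I_n -> C) (i0 : 'I_n).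
Hypothesis hx : phase_vec E x (comp E i0).
Local Notation K := (comp E i0).

Lemma phase_mono a b d : a \in K -> [set a; b; d] \in E -> x a = x b -> x d = x a.
Proof.
move=> ha he hab; have [_ r2 _] := phase_edge hx ha he.
by apply: (mulfI (phase_nz hx ha)); rewrite r2 -hab expr2.
Qed.

Lemma phase_rainbow a b d : a \in K -> [set a; b; d] \in E -> x a != x b ->
  x d != x a /\ x d != x b.
Proof.
move=> ha he hab; have [hb hd] := edge_comp ha he.
have [_ _ r3] := phase_edge hx ha he.
split; apply: contra_neq hab => hd'; rewrite hd' expr2 in r3.
  exact/esym/(mulfI (phase_nz hx ha) r3).
exact/(mulIf (phase_nz hx hb) r3).
Qed.

(* The cube x_w^3 is constant on the component, so x / x_i0 takes values in
   the cube roots of unity. *)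
Lemma phase_ratio_cube w : w \in K -> (x w / x i0) ^+ 3 = 1.
Proof.
move=> hw; have hx0 := phase_nz hx (comp_refl E i0).
suff cube_const : x w ^+ 3 = x i0 ^+ 3 by rewrite exprMn exprVn cube_const divff ?expf_neq0.
move: w hw; apply: comp_ind => // u v hu /existsP[e /and3P[he hue hve]] hF.
have [<- //|huv] := eqVneq u v.
have [k hek] := edge_third (E3 he) hue hve huv.
rewrite hek in he; have [r1 r2 _] := phase_edge hx hu he.
by rewrite -hF (exprS (x v) 2) (exprS (x u) 2) -r1 -r2 mulrCA.
Qed.

Lemma phase_three_values a b d w : a \in K -> b \in K -> d \in K -> w \in K ->
  x a != x b -> x a != x d -> x b != x d -> (x w == x a) || (x w == x b) || (x w == x d).
Proof.
have hdiv := inj_eq (mulIf (invr_neq0 (phase_nz hx (comp_refl E i0)))).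
move=> ha hb hd hw hab had hbd.
have := @cube_roots_cover _ (x a / x i0) (x b / x i0) (x d / x i0) (x w / x i0).
by rewrite !hdiv !phase_ratio_cube //; apply.
Qed.

(* An N-eigenvector cannot be constant on its component: some edge of K is
   not monochromatic. *)
Lemma phase_N_rainbow_edge : is_N x ->
  exists u v k, [/\ u \in K, [set u; v; k] \in E & x u != x v].
Proof.
move=> hN.
case: (boolP [exists u, exists v, exists k,
                [&& u \in K, [set u; v; k] \in E & x u != x v]]).
  by case/existsP=> u /existsP[v /existsP[k /and3P[h1 h2 h3]]]; exists u, v, k.
rewrite negb_exists => /forallP hno.
have hconst : forall w, w \in K -> x w = x i0.
  apply: comp_ind => // u v hu /existsP[e /and3P[he hue hve]] hF.
  have [<- //|huv] := eqVneq u v.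
  have [k hek] := edge_third (E3 he) hue hve huv.
  move: (hno u); rewrite negb_exists => /forallP /(_ v).
  by rewrite negb_exists => /forallP /(_ k); rewrite hu -hek he /= negbK => /eqP <-.
have hx0 := phase_nz hx (comp_refl E i0).
case: hN; exists (x i0)^-1; split=> [|v]; first by rewrite invr_eq0.
have [hv|hv] := boolP (v \in K); first by rewrite hconst // mulVf.
by case: hx => h0 _ _; rewrite (h0 v hv) mulr0 real0.
Qed.

End PhaseValues.

Section LevelSets.
Variables (C : numClosedFieldType) (n : nat) (E : {set {set 'I_n}}).
Hypothesis E3 : forall e, e \in E -> #|e| = 3%N.

Definition level_sets (x : 'I_n -> C) : {set {set 'I_n}} := preim_partition x (supp x).

Lemma pair_equiv_levels (x y : 'I_n -> C) : pair_equiv x y ->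
  supp x = supp y /\ forall u v, (x u == x v) = (y u == y v).
Proof.
elim=> {x y} [x y [[c [hc ->]]|->] | x | x y _ [-> h] | x y z _ [-> h1] _ [-> h2]];
  do ?by split=> // u v; rewrite ?h ?h1 ?h2.
  have hc0 : c != 0 by rewrite -normr_eq0 hc oner_eq0.
  split=> [|u v]; last by rewrite (inj_eq (mulfI hc0)).
  by apply/setP=> u; rewrite !inE mulf_eq0 (negbTE hc0).
split=> [|u v]; last by rewrite (inj_eq (can_inj conjCK)).
by apply/setP=> u; rewrite !inE conjC_eq0.
Qed.

Lemma level_sets_equiv (x y : 'I_n -> C) : pair_equiv x y -> level_sets x = level_sets y.
Proof.
case/pair_equiv_levels=> hsupp hlev; rewrite /level_sets /preim_partition hsupp.
by apply: eq_imset => u; apply/setP=> v; rewrite !inE hlev.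
Qed.

Lemma level_sets_trip_vec P K : partition P K -> #|P| = 3%N ->
  level_sets (trip_vec C P) = P.
Proof.
move=> hP hP3.
have hsupp : supp (trip_vec C P) = K.
  apply/setP=> v; rewrite inE; have [hv|hv] := boolP (v \in K).
    by rewrite (trip_vec_in C hP) // expf_neq0 // om_neq0.
  by rewrite (trip_vec_out C hP hv) eqxx.
rewrite /level_sets hsupp -[RHS](preim_partition_pblock hP).
apply: eq_in_imset => u hu; apply/setP=> v; rewrite !inE.
by apply: andb_id2l => hv; rewrite (trip_vec_eq C hP).
Qed.

Section PhaseLevels.
Variables (x : 'I_n -> C) (i0 : 'I_n).
Hypothesis hx : phase_vec E x (comp E i0).
Local Notation K := (comp E i0).
Local Notation P := (level_sets x).

Lemma level_sets_partition : partition P K.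
Proof. by rewrite /level_sets (supp_phase hx); apply: preim_partitionP. Qed.

Lemma level_pblock u v : u \in K -> v \in K -> (v \in pblock P u) = (x u == x v).
Proof.
move=> hu hv; rewrite /level_sets (supp_phase hx).
by apply: pblock_equivalence_partition => // a b c _ _ _; split=> // /eqP ->.
Qed.

Lemma level_pblock_mem u : u \in K -> pblock P u \in P.
Proof. by move=> hu; rewrite pblock_mem ?(cover_partition level_sets_partition). Qed.

Lemma level_pblock_eq u v : u \in K -> v \in K -> (pblock P u == pblock P v) = (x u == x v).
Proof.
move=> hu hv; have /and3P[/eqP hcov htriv _] := level_sets_partition.
by rewrite eq_pblock ?hcov // level_pblock.
Qed.

Lemma level_block B : B \in P -> exists2 w, w \in K & B = pblock P w.
Proof.
move=> hB; have /and3P[/eqP hcov htriv hnot0] := level_sets_partition.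
have [w hw] : exists w, w \in B by apply/set0Pn; apply: contraNneq hnot0 => <-.
exists w; last by rewrite (def_pblock htriv hB hw).
by rewrite -hcov; apply/bigcupP; exists B.
Qed.

Hypothesis hN : is_N x.

(* The level sets of an N phase vector are exactly three: those of the three
   values on a rainbow edge. *)
Lemma level_sets_card : #|P| = 3%N.
Proof.
have [u [v [k [hu he huv]]]] := phase_N_rainbow_edge E3 hx hN.
have [hv hk] := edge_comp hu he; have [hku hkv] := phase_rainbow hx hu he huv.
have -> : P = [set pblock P u; pblock P v; pblock P k].
  apply/setP=> B; rewrite !inE; apply/idP/idP => [/level_block[w hw ->]|].
    rewrite !level_pblock_eq //.
    by apply: (phase_three_values E3 hx hu hv hk hw huv); rewrite eq_sym.
  by case/orP=> [/orP[]|] /eqP ->; apply: level_pblock_mem.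
rewrite -setUA cardsU1 cards2 !inE negb_or !level_pblock_eq //.
by rewrite huv eq_sym hku eq_sym hkv.
Qed.

(* Every edge of K is monochromatic or rainbow, hence inside a block or
   meeting all three blocks. *)
Lemma level_sets_tripartition : tripartition E K P.
Proof.
rewrite /tripartition level_sets_partition level_sets_card eqxx /=.
apply/forall_inP=> e he; apply/implyP=> heK.
have [a hae] : exists a, a \in e by apply/set0Pn; rewrite -card_gt0 E3.
have [b [d [_ _ _ hed]]] := edge_split (E3 he) hae.
rewrite hed in he heK *; have ha : a \in K by apply: (subsetP heK); rewrite hed in hae.
have [hb hd] := edge_comp ha he.
have [hab|hab] := eqVneq (x a) (x b).
  have hda := phase_mono hx ha he hab.
  apply/orP; left; apply/exists_inP; exists (pblock P a).
    exact: level_pblock_mem ha.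
  by rewrite !subUset !sub1set !level_pblock // -hab hda !eqxx.
have [hda hdb] := phase_rainbow hx ha he hab.
apply/orP; right; apply/forall_inP=> B /level_block[w hw ->]; apply/set0Pn.
have had : x a != x d by rewrite eq_sym.
have hbd : x b != x d by rewrite eq_sym.
case/orP: (phase_three_values E3 hx ha hb hd hw hab had hbd) => [/orP[]|] /eqP hwv;
  [exists a | exists b | exists d]; by rewrite inE level_pblock // hwv eqxx !inE eqxx ?orbT.
Qed.

End PhaseLevels.
End LevelSets.

Section Equivalence.
Variables (C : numClosedFieldType) (n : nat) (E : {set {set 'I_n}}).
Hypothesis E3 : forall e, e \in E -> #|e| = 3%N.

Lemma equiv_scale (y : 'I_n -> C) c : `|c| = 1 -> pair_equiv (fun v => c * y v) y.
Proof. by move=> hc; apply/rst_sym/rst_step; left; exists c. Qed.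

Lemma equiv_conj (y : 'I_n -> C) : pair_equiv (fun v => (y v)^*) y.
Proof. by apply/rst_sym/rst_step; right. Qed.

(* Two phase vectors on the same component with the same level sets are
   equivalent: after dividing by their values at i0, they agree or are
   complex conjugate (cube_ratio_uniform). *)
Lemma phase_same_levels_equiv (x y : 'I_n -> C) i0 :
  phase_vec E x (comp E i0) -> phase_vec E y (comp E i0) ->
  {in comp E i0 &, forall u v, (x u == x v) = (y u == y v)} -> pair_equiv x y.
Proof.
move=> hx hy hlev.
have hx0 := phase_nz hx (comp_refl E i0); have hy0 := phase_nz hy (comp_refl E i0).
have hdiv (z : 'I_n -> C) (c : C) : c != 0 ->
    forall u v, (z u / c == z v / c) = (z u == z v).
  by move=> hc u v; rewrite (inj_eq (mulIf (invr_neq0 hc))).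
have ab_eq : {in comp E i0 &, forall u v,
    (x u / x i0 == x v / x i0) = (y u / y i0 == y v / y i0)}.
  by move=> u v hu hv; rewrite !hdiv // hlev.
have ab_1 : {in comp E i0, forall u, (x u / x i0 == 1) = (y u / y i0 == 1)}.
  move=> u hu; rewrite -[X in _ == X](divff hx0) -[X in _ = (_ == X)](divff hy0).
  by rewrite !hdiv // hlev ?comp_refl.
have [x0 x1 _] := hx; have [y0 y1 _] := hy.
have hnorm : `|x i0| = 1 /\ `|y i0| = 1 by rewrite x1 ?y1 ?comp_refl.
have scale (c : C) (z : 'I_n -> C) : `|c| = 1 -> {in comp E i0, forall v, x v = c * z v} ->
    (forall v, v \notin comp E i0 -> z v = 0) -> pair_equiv x z.
  move=> hc hK hout; rewrite (_ : x = fun v => c * z v); first exact: equiv_scale.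
  apply: functional_extensionality => v; have [hv|hv] := boolP (v \in comp E i0).
    exact: hK.
  by rewrite x0 // hout // mulr0.
case: hnorm => nx ny.
have [same|conj] :=
  cube_ratio_uniform (phase_ratio_cube E3 hx) (phase_ratio_cube E3 hy) ab_eq ab_1.
  apply: (scale (x i0 / y i0)); first by rewrite normrM normfV nx ny divr1.
    by move=> v hv; rewrite -[x v](divfK hx0) same //; ring.
  exact: y0.
apply: rst_trans (equiv_conj y).
apply: (scale (x i0 / (y i0)^*)); first by rewrite normrM normfV norm_conjC nx ny divr1.
  by move=> v hv; rewrite -[x v](divfK hx0) conj // rmorphM /= fmorphV; ring.
by move=> v hv; rewrite y0 // conjC0.
Qed.

End Equivalence.

Section Classification.
Variables (C : numClosedFieldType) (n : nat) (E : {set {set 'I_n}}).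
Hypothesis E3 : forall e, e \in E -> #|e| = 3%N.

Lemma min_can_N_classify (x : 'I_n -> C) : min_can_N E x ->
  exists i0, tripartition E (comp E i0) (level_sets x) /\
             pair_equiv x (trip_vec C (level_sets x)).
Proof.
move=> [hmin [hcan hN]]; have [i0 hx] := minimal_phase E3 hmin hcan.
have ht := level_sets_tripartition E3 hx hN.
exists i0; split=> //; apply: (phase_same_levels_equiv E3 hx (trip_vec_phase C E3 ht)).
move=> u v hu hv; have /and3P[hP /eqP hP3 _] := ht.
by rewrite (trip_vec_eq C hP hP3) // (level_pblock_eq hx).
Qed.

(* Distinct tripartitions of components, over all components, are counted by
   num_tripartite: a tripartition determines the component it covers. *)
Lemma num_tripartite_card :
  num_tripartite E = #|[set P | [exists Cc in components E, tripartition E Cc P]]|.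
Proof.
rewrite card_indicator /num_tripartite.
under eq_bigr => Cc _ do rewrite card_indicator.
rewrite exchange_big /=; apply: eq_bigr => P _; rewrite inE.
have [/exists_inP[Cc0 hC0 ht0]|hno] :=
  boolP [exists Cc in components E, tripartition E Cc P].
  rewrite (bigD1 Cc0) //= inE ht0 big1 // => Cc /andP[_ hne]; apply/eqP; rewrite inE eqb0.
  apply: contra hne => ht; case/and3P: ht0 => /cover_partition <- _ _.
  by case/and3P: ht => /cover_partition <-.
rewrite big1 // => Cc hC; apply/eqP; rewrite inE eqb0; apply: contra hno => ht.
by apply/exists_inP; exists Cc.
Qed.

End Classification.

Unset Implicit Arguments.

Theorem proposition6p1 (C : numClosedFieldType) (n : nat) (E : {set {set 'I_n}}) :
  (3 <= n)%N -> E != set0 -> (forall e, e \in E -> #|e| = 3%N) ->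
  exists reps : 'I_(num_tripartite E) -> ('I_n -> C),
    (forall k, min_can_N E (reps k)) /\
    (forall k l, pair_equiv (reps k) (reps l) -> k = l) /\
    (forall x, min_can_N E x -> exists k, pair_equiv x (reps k)).
Proof.
move=> _ _ E3.
pose S := [set P | [exists Cc in components E, tripartition E Cc P]].
have hsz : size (enum S) = num_tripartite E by rewrite num_tripartite_card -cardE.
have inS P : P \in S -> exists i0, tripartition E (comp E i0) P.
  by rewrite inE => /exists_inP[_ /imsetP[i0 _ ->] ht]; exists i0.
have nthS (k : 'I_(num_tripartite E)) : nth set0 (enum S) k \in S.
  by rewrite -mem_enum mem_nth // hsz.
exists (fun k => trip_vec C (nth set0 (enum S) k)); split; [|split].
- by move=> k; have [i0 ht] := inS _ (nthS k); exact (trip_vec_min_can_N C E3 ht).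
- move=> k l /level_sets_equiv.
  have [i0 /and3P[hP0 /eqP hP03 _]] := inS _ (nthS k).
  have [i1 /and3P[hP1 /eqP hP13 _]] := inS _ (nthS l).
  rewrite (level_sets_trip_vec C hP0 hP03) (level_sets_trip_vec C hP1 hP13) => /eqP.
  rewrite nth_uniq ?hsz ?enum_uniq //.
  by move/eqP/val_inj.
- move=> x /(min_can_N_classify E3)[i0 [ht hequiv]].
  have hS : level_sets x \in S.
    by rewrite inE; apply/exists_inP; exists (comp E i0) => //; apply: imset_f.
  have hidx : (index (level_sets x) (enum S) < num_tripartite E)%N.
    by rewrite -hsz index_mem mem_enum.
  by exists (Ordinal hidx); rewrite /= nth_index ?mem_enum.
Qed.
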